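(* Let $(\gamma_{1j},\gamma_{2j})$, $j=1,\ldots,n$, be independent (across $j$) pairs of possibly correlated Bernoulli random variables with $\mathbb{E}\gamma_{ij}=\pi_{ij}$, let $\eta=(\eta_1,\ldots,\eta_n)$ be i.i.d. Bernoulli$(1/2)$ variables independent of all $\gamma_{ij}$, and let $\boldsymbol{A}=(a_{ij})$ be a deterministic real $n\times n$ matrix. For $0<\tau\le 1/(4\|\boldsymbol{A}\|_2^2)$, $$ \mathbb{E}\Big[\exp\Big(\tau\sum_{i:\eta_i=1}\gamma_{1i}\sum_{j:\eta_j=0}a_{ij}^2\gamma_{2j}\Big)\,\Big|\,\eta\Big]\le\exp\Big(1.44\,\tau\sum_{i\ne j}a_{ij}^2\pi_{1i}\pi_{2j}\Big). $$
   Context: $\|\boldsymbol{A}\|_2$ denotes the operator norm of $\boldsymbol{A}$. *)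

From HB Require Import structures.
From mathcomp Require Import all_boot all_order all_algebra.
From mathcomp Require Import all_classical all_reals all_analysis.
Set Implicit Arguments. Unset Strict Implicit. Unset Printing Implicit Defensive.
Import Order.TTheory GRing.Theory Num.Theory.
Local Open Scope ring_scope.
Local Open Scope classical_set_scope.

Definition opnorm (R : realType) (n : nat) (A : 'M[R]_n) : R :=
  sup [set r : R | exists x : 'cV[R]_n,
         \sum_(i < n) x i 0 ^+ 2 = 1 /\
         r = Num.sqrt (\sum_(i < n) (A *m x) i 0 ^+ 2)].

(* Finite sample space: outcomes of the pairs (gamma_1j, gamma_2j)_j and of
   eta = (eta_j)_j. *)
Definition gam_space (n : nat) := {ffun 'I_n -> bool * bool}.
Definition eta_space (n : nat) := {ffun 'I_n -> bool}.

(* Probability of an outcome: the pairs are independent across j, pair j has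
   joint law p j (p j a b = P(gamma_1j = a, gamma_2j = b)), and eta is an
   independent vector of i.i.d. Bernoulli(1/2) variables. *)
Definition weight (R : realType) (n : nat) (p : 'I_n -> bool -> bool -> R)
    (g : gam_space n) (e : eta_space n) : R :=
  (\prod_(j < n) p j (g j).1 (g j).2) * (\prod_(j < n) (2%:R)^-1).

(* Conditional expectation of X given eta, evaluated at eta = e
   (every value e of eta has probability 2^-n > 0). *)
Definition cond_exp_eta (R : realType) (n : nat) (p : 'I_n -> bool -> bool -> R)
    (X : gam_space n -> eta_space n -> R) (e : eta_space n) : R :=
  (\sum_(g : gam_space n) weight p g e * X g e) /
  (\sum_(g : gam_space n) weight p g e).

Definition pi1 (R : realType) (n : nat) (p : 'I_n -> bool -> bool -> R) (j : 'I_n) : R :=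
  \sum_(b : bool) p j true b.
Definition pi2 (R : realType) (n : nat) (p : 'I_n -> bool -> bool -> R) (j : 'I_n) : R :=
  \sum_(a : bool) p j a true.

From mathcomp Require Import all_boot all_order all_algebra.
From mathcomp Require Import all_classical all_reals all_analysis.
From mathcomp Require Import ring lra.

Set Implicit Arguments.
Unset Strict Implicit.
Unset Printing Implicit Defensive.

Import Order.TTheory GRing.Theory Num.Theory.
Local Open Scope ring_scope.

(* Fix eta and let S = {i | eta_i}. The exponent involves gamma_1i only for i in S
   and gamma_2j only for j outside S; these come from different pairs, so they form
   independent Bernoulli vectors x and y with means pi_1i and pi_2j, and the pairs can
   be decoupled. Integrating out x for fixed y gives a product of Bernoulli moment
   generating functions 1 - q + q e^a with 0 <= a <= tau ||A||^2 <= 1/4, each at most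
   exp (6/5 q a) because e^a <= 1 + 6/5 a on [0, 3/10]. What remains is the exponential
   of a linear form in y with coefficients at most 6/5 * 1/4 = 3/10, and integrating out
   y costs a second factor 6/5, whence 36/25 = 1.44. The row and column sums of
   (a_ij^2) are bounded by ||A||^2. *)

Section ProductWeights.
Variables (R : comNzRingType) (I : finType).

Lemma prod_indicator_ffun (T : eqType) (f : I -> T) (z : {ffun I -> T}) :
  \prod_j ((f j == z j)%:R : R) = (finfun f == z)%:R.
Proof.
have [<-|ne] := eqVneq (finfun f) z; first by rewrite big1 // => j _; rewrite ffunE eqxx.
have [j fj] : exists j, f j != z j.
  apply/existsP; apply: contraNT ne => /existsPn fz.
  by apply/eqP/ffunP => j; rewrite ffunE; apply/eqP; rewrite -[_ == _]negbK fz.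
by rewrite (bigD1 j) //= (negbTE fj) mul0r.
Qed.

Lemma sum_mul_indicator (T : finType) (F : T -> R) (t : T) :
  \sum_s F s * (s == t)%:R = F t.
Proof.
by rewrite (bigD1 t) //= eqxx mulr1 big1 ?addr0 // => s /negbTE ->; rewrite mulr0.
Qed.

Lemma sum_ffun_comp (X Y : finType) (w : I -> X -> R) (h : I -> X -> Y)
    (G : {ffun I -> Y} -> R) :
  \sum_(g : {ffun I -> X}) (\prod_j w j (g j)) * G [ffun j => h j (g j)] =
  \sum_(z : {ffun I -> Y}) (\prod_j \sum_u w j u * (h j u == z j)%:R) * G z.
Proof.
have G_pick g : G [ffun j => h j (g j)] =
    \sum_(z : {ffun I -> Y}) (\prod_j ((h j (g j) == z j)%:R : R)) * G z.
  under eq_bigr do rewrite prod_indicator_ffun.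
  by rewrite (bigD1 [ffun j => h j (g j)]) //= eqxx mul1r big1 ?addr0 // => z;
    rewrite eq_sym => /negbTE ->; rewrite mul0r.
under eq_bigr do rewrite G_pick big_distrr /=.
rewrite exchange_big; apply: eq_bigr => z _ /=.
rewrite bigA_distr_bigA big_distrl; apply: eq_bigr => g _ /=.
by rewrite big_split mulrA.
Qed.

Lemma sum_ffun_pair (X Y : finType) (F : {ffun I -> X * Y} -> R) :
  \sum_g F g = \sum_(x : {ffun I -> X}) \sum_(y : {ffun I -> Y}) F [ffun j => (x j, y j)].
Proof.
rewrite pair_bigA.
rewrite (reindex (fun xy : {ffun I -> X} * {ffun I -> Y} => [ffun j => (xy.1 j, xy.2 j)])) //.
apply: onW_bij.
exists (fun g : {ffun I -> X * Y} => ([ffun j => (g j).1], [ffun j => (g j).2])).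
  by case=> x y; congr pair; apply/ffunP => j; rewrite !ffunE.
by move=> g; apply/ffunP => j; rewrite !ffunE -surjective_pairing.
Qed.

Lemma sum_pair_select (T : finType) (v : T * T -> R) (b : bool) (t : T) :
  \sum_u v u * ((if b then u.1 else u.2) == t)%:R =
  if b then \sum_s v (t, s) else \sum_s v (s, t).
Proof.
have -> : \sum_u v u * ((if b then u.1 else u.2) == t)%:R =
    \sum_s \sum_s' v (s, s') * ((if b then s else s') == t)%:R.
  by rewrite pair_bigA; apply: eq_bigr => -[].
case: b => /=; last rewrite exchange_big /=;
  by under eq_bigr do rewrite -big_distrl /=; rewrite sum_mul_indicator.
Qed.

Lemma sum_ffun_pair_decouple (T : finType) (w : I -> T * T -> R) (c : pred I)
    (F : {ffun I -> T} -> {ffun I -> T} -> R) :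
  (forall j, \sum_u w j u = 1) ->
  (forall x x' y y' : {ffun I -> T}, (forall j, c j -> x j = x' j) ->
     (forall j, ~~ c j -> y j = y' j) -> F x y = F x' y') ->
  \sum_(g : {ffun I -> T * T}) (\prod_j w j (g j)) *
      F [ffun j => (g j).1] [ffun j => (g j).2] =
  \sum_(x : {ffun I -> T}) \sum_(y : {ffun I -> T})
    (\prod_j \sum_t w j (x j, t)) * (\prod_j \sum_s w j (s, y j)) * F x y.
Proof.
move=> w1 F_local.
(* F x y only depends on the selected vector sel (x, y), and the j-th selected
   coordinate has the same law under w j as under the product of its marginals. *)
pose sel j (u : T * T) := if c j then u.1 else u.2.
pose G z := F z z.
have F_sel (x y : {ffun I -> T}) : F x y = G [ffun j => sel j (x j, y j)].
  by apply: F_local => j; rewrite ffunE /sel; [move->|move/negbTE->].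
pose m1 j s := \sum_t w j (s, t); pose m2 j t := \sum_s w j (s, t).
have m1_sum1 j : \sum_s m1 j s = 1.
  by rewrite -(w1 j) /m1 pair_bigA; apply: eq_bigr => -[].
have m2_sum1 j : \sum_t m2 j t = 1.
  by rewrite -(w1 j) /m2 exchange_big pair_bigA; apply: eq_bigr => -[].
transitivity (\sum_(g : {ffun I -> T * T}) (\prod_j w j (g j)) * G [ffun j => sel j (g j)]).
  by apply: eq_bigr => g _; rewrite F_sel; congr (_ * G _); apply/ffunP => j; rewrite !ffunE.
transitivity (\sum_(g : {ffun I -> T * T}) (\prod_j (m1 j (g j).1 * m2 j (g j).2)) *
    G [ffun j => sel j (g j)]); last first.
  rewrite sum_ffun_pair; apply: eq_bigr => x _; apply: eq_bigr => y _.
  rewrite big_split [F x y]F_sel.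
  by congr (_ * _ * G _); (apply: eq_bigr => j _ || apply/ffunP => j); rewrite !ffunE.
rewrite sum_ffun_comp (sum_ffun_comp (fun j u => m1 j u.1 * m2 j u.2)).
apply: eq_bigr => z _; congr (_ * _); apply: eq_bigr => j _.
rewrite !sum_pair_select /=; case: (c j).
  by rewrite -mulr_sumr m2_sum1 mulr1.
by rewrite -mulr_suml m1_sum1 mul1r.
Qed.
End ProductWeights.

Section NonnegSums.
Variables (R : realDomainType) (I : finType).

Lemma sum_weighted_le (S : pred I) (u v : I -> R) :
  (forall k, 0 <= u k <= 1) -> (forall k, 0 <= v k) ->
  \sum_(k | S k) v k * u k <= \sum_k v k.
Proof.
move=> u_range v_ge0; rewrite big_mkcond /=; apply: ler_sum => k _.
have /andP[u_ge0 u_le1] := u_range k; have := v_ge0 k.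
by case: (S k); nra.
Qed.

Lemma sum_cross_le_offdiag (P Q : pred I) (F : I -> I -> R) :
  (forall i, P i -> ~~ Q i) -> (forall i j, 0 <= F i j) ->
  \sum_(i | P i) \sum_(j | Q j) F i j <= \sum_i \sum_(j | i != j) F i j.
Proof.
move=> PQ F_ge0; rewrite [leLHS]big_mkcond /=; apply: ler_sum => i _.
case: ifP => [Pi|_]; last by apply: sumr_ge0 => j _.
rewrite [leRHS](bigID Q) /=.
have -> : \sum_(j | (i != j) && Q j) F i j = \sum_(j | Q j) F i j.
  by apply: eq_bigl => j; case: eqVneq => [<-|//]; rewrite (negbTE (PQ i Pi)).
by rewrite lerDl sumr_ge0.
Qed.

End NonnegSums.

Section ExpBounds.
Variable R : realType.

Lemma expR_le_invrB (y : R) : y < 1 -> expR y <= (1 - y)^-1.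
Proof.
move=> y_lt1; rewrite -[expR y]invrK -expRN lef_pV2 ?posrE ?expR_gt0 ?subr_gt0 //.
exact: expR_ge1Dx.
Qed.

Lemma expR_3_10_le : expR (3/10 : R) <= 34/25.
Proof.
have -> : (3/10 : R) = 8%:R * (3/80) by lra.
rewrite expRM_natl; apply: (@le_trans _ _ ((80/77 : R) ^+ 8)); last by lra.
apply: lerXn2r; rewrite ?nnegrE ?expR_ge0 //.
have -> : (80/77 : R) = (1 - 3/80)^-1 by rewrite -invf_div; congr (_^-1); lra.
by apply: expR_le_invrB; lra.
Qed.

Lemma expR_le1D65x (x : R) : 0 <= x <= 3/10 -> expR x <= 1 + 6/5 * x.
Proof.
move=> /andP[x_ge0 x_le].
have t_ge0 : 0 <= x * (10/3) by lra.
have t_le1 : x * (10/3) <= 1 by lra.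
have := convex_expR (Itv01 t_ge0 t_le1) (3/10 : R^o) (0 : R^o).
rewrite !convRE /= expR0 /unstable.onem mulr0 addr0.
have -> : x * (10/3) * (3/10) = x by field.
move/le_trans; apply; have := expR_3_10_le; nra.
Qed.

Lemma bernoulli_expR_le (q0 q1 a : R) :
  0 <= q1 -> q0 + q1 = 1 -> 0 <= a <= 3/10 ->
  q0 + q1 * expR a <= expR (6/5 * (q1 * a)).
Proof.
move=> q1_ge0 q_sum1 a_range; apply: le_trans (expR_ge1Dx _).
have := expR_le1D65x a_range; nra.
Qed.

End ExpBounds.

Section BernoulliProducts.
Variables (R : realType) (I : finType).

Lemma bool_range (b : bool) : 0 <= (b%:R : R) <= 1.
Proof. by case: b; rewrite ?ler01 ?lexx. Qed.

Lemma bernoulli_range (r : bool -> R) :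
  (forall b, 0 <= r b) -> r false + r true = 1 -> 0 <= r true <= 1.
Proof. by move=> r_ge0 r_sum1; rewrite r_ge0 /=; have := r_ge0 false; lra. Qed.

Lemma bernoulli_expR_sum_le (r : I -> bool -> R) (P : pred I) (a : I -> R) :
  (forall i b, 0 <= r i b) -> (forall i, r i false + r i true = 1) ->
  (forall i, 0 <= a i <= 3/10) ->
  \sum_(x : {ffun I -> bool}) (\prod_i r i (x i)) * expR (\sum_(i | P i) (x i)%:R * a i)
  <= expR (6/5 * \sum_(i | P i) r i true * a i).
Proof.
move=> r_ge0 r_sum1 a_range.
have expR_sumP (x : {ffun I -> bool}) : expR (\sum_(i | P i) (x i)%:R * a i) =
    \prod_i (if P i then expR ((x i)%:R * a i) else 1).
  by rewrite expR_sum big_mkcond.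
under eq_bigr do rewrite expR_sumP -big_split /=.
rewrite -(bigA_distr_bigA (fun i b => r i b * (if P i then expR (b%:R * a i) else 1))) /=.
rewrite mulr_sumr expR_sum [X in _ <= X]big_mkcond /=.
apply: ler_prod => i _; rewrite big_bool /=.
case: (P i); last by rewrite !mulr1 addrC r_sum1 ler01 lexx.
rewrite mulr1n mul1r mul0r expR0 mulr1 addrC.
by rewrite addr_ge0 ?mulr_ge0 ?expR_ge0 ?bernoulli_expR_le.
Qed.

Lemma bernoulli_bilinear_expR_le_cond (r : I -> bool -> R) (P Q : pred I)
    (B : I -> I -> R) (tau M : R) (y : {ffun I -> bool}) :
  (forall i b, 0 <= r i b) -> (forall i, r i false + r i true = 1) ->
  (forall i j, 0 <= B i j) -> (forall i, \sum_j B i j <= M) ->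
  0 <= tau -> 4 * tau * M <= 1 ->
  \sum_(x : {ffun I -> bool}) (\prod_i r i (x i)) *
      expR (tau * \sum_(i | P i) ((x i)%:R * \sum_(j | Q j) B i j * (y j)%:R))
  <= expR (\sum_(j | Q j) (y j)%:R * (6/5 * tau * \sum_(i | P i) B i j * r i true)).
Proof.
move=> r_ge0 r_sum1 B_ge0 row_le tau_ge0 tauM_le.
pose c i := tau * \sum_(j | Q j) B i j * (y j)%:R.
have c_range i : 0 <= c i <= 3/10.
  have : \sum_(j | Q j) B i j * (y j)%:R <= M.
    exact: le_trans (sum_weighted_le Q (fun j => bool_range (y j)) (B_ge0 i)) (row_le i).
  have : 0 <= \sum_(j | Q j) B i j * (y j)%:R.
    by apply: sumr_ge0 => j _; rewrite mulr_ge0 ?B_ge0 ?ler0n.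
  by rewrite /c => c_ge0 c_le; apply/andP; split; nra.
have -> : \sum_(j | Q j) (y j)%:R * (6/5 * tau * \sum_(i | P i) B i j * r i true) =
    6/5 * \sum_(i | P i) r i true * c i.
  rewrite /c mulr_sumr.
  under eq_bigr do rewrite mulrA mulr_sumr.
  under [X in _ = X]eq_bigr do rewrite !mulrA mulr_sumr.
  by rewrite exchange_big; apply: eq_bigr => i _; apply: eq_bigr => j _ /=; ring.
have expR_arg (x : {ffun I -> bool}) :
    tau * \sum_(i | P i) ((x i)%:R * \sum_(j | Q j) B i j * (y j)%:R) =
    \sum_(i | P i) (x i)%:R * c i.
  by rewrite mulr_sumr; apply: eq_bigr => i _; rewrite /c; ring.
under eq_bigr do rewrite expR_arg.
exact: bernoulli_expR_sum_le.
Qed.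

Lemma bernoulli_bilinear_expR_le (r s : I -> bool -> R) (P Q : pred I)
    (B : I -> I -> R) (tau M : R) :
  (forall i b, 0 <= r i b) -> (forall i, r i false + r i true = 1) ->
  (forall j b, 0 <= s j b) -> (forall j, s j false + s j true = 1) ->
  (forall i j, 0 <= B i j) ->
  (forall i, \sum_j B i j <= M) -> (forall j, \sum_i B i j <= M) ->
  0 <= tau -> 4 * tau * M <= 1 ->
  \sum_(x : {ffun I -> bool}) \sum_(y : {ffun I -> bool})
      (\prod_i r i (x i)) * (\prod_j s j (y j)) *
      expR (tau * \sum_(i | P i) ((x i)%:R * \sum_(j | Q j) B i j * (y j)%:R))
  <= expR (36/25 * tau * \sum_(i | P i) \sum_(j | Q j) r i true * B i j * s j true).
Proof.
move=> r_ge0 r_sum1 s_ge0 s_sum1 B_ge0 row_le col_le tau_ge0 tauM_le.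
pose a j := 6/5 * tau * \sum_(i | P i) B i j * r i true.
have a_range j : 0 <= a j <= 3/10.
  have r_range i := bernoulli_range (r_ge0 i) (r_sum1 i).
  have : \sum_(i | P i) B i j * r i true <= M.
    exact: le_trans (sum_weighted_le P r_range (fun i => B_ge0 i j)) (col_le j).
  have : 0 <= \sum_(i | P i) B i j * r i true.
    by apply: sumr_ge0 => i _; rewrite mulr_ge0 ?B_ge0 ?r_ge0.
  by rewrite /a => a_ge0 a_le; apply/andP; split; nra.
apply: (@le_trans _ _ (\sum_(y : {ffun I -> bool}) (\prod_j s j (y j)) *
    expR (\sum_(j | Q j) (y j)%:R * a j))).
  rewrite exchange_big /=; apply: ler_sum => y _.
  under eq_bigr do rewrite mulrAC.
  rewrite -big_distrl /= mulrC ler_wpM2l ?prodr_ge0 //.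
  exact: bernoulli_bilinear_expR_le_cond r_ge0 r_sum1 B_ge0 row_le tau_ge0 tauM_le.
have -> : 36/25 * tau * \sum_(i | P i) \sum_(j | Q j) r i true * B i j * s j true =
    6/5 * \sum_(j | Q j) s j true * a j.
  rewrite /a exchange_big !mulr_sumr; apply: eq_bigr => j _.
  by rewrite !mulr_sumr; apply: eq_bigr => i _; field.
exact: bernoulli_expR_sum_le.
Qed.

End BernoulliProducts.

Section OperatorNorm.
Variables (R : realType) (n : nat).
Implicit Types (A : 'M[R]_n) (x : 'cV[R]_n).

Lemma opnorm_ge A x :
  \sum_i x i 0 ^+ 2 = 1 -> Num.sqrt (\sum_i (A *m x) i 0 ^+ 2) <= opnorm A.
Proof.
move=> x_unit; apply: sup_upper_bound; last by exists x.
split; first by exists (Num.sqrt (\sum_i (A *m x) i 0 ^+ 2)), x.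
exists (Num.sqrt (\sum_k (\sum_j `|A k j|) ^+ 2)) => _ [y [y_unit ->]].
rewrite ler_sqrt; last by apply: sumr_ge0 => k _; exact: sqr_ge0.
apply: ler_sum => k _; rewrite -real_normK ?num_real //.
apply: lerXn2r; rewrite ?nnegrE ?sumr_ge0 //.
rewrite mxE; apply: le_trans (ler_norm_sum _ _ _) _; apply: ler_sum => j _.
have yj_le1 : `|y j 0| <= 1.
  rewrite -(expr_le1 (n := 2)) // real_normK ?num_real // -y_unit.
  by rewrite (bigD1 j) //= lerDl sumr_ge0 // => i _; exact: sqr_ge0.
by rewrite normrM ler_piMr.
Qed.

Lemma opnorm_col A j : \sum_i A i j ^+ 2 <= opnorm A ^+ 2.
Proof.
pose x : 'cV[R]_n := \col_k (k == j)%:R.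
have x_unit : \sum_i x i 0 ^+ 2 = 1.
  rewrite (bigD1 j) //= big1 => [|i /negbTE ji]; rewrite mxE ?eqxx ?ji ?expr1n ?addr0 //.
  by rewrite expr0n.
have Ax_col : \sum_i (A *m x) i 0 ^+ 2 = \sum_i A i j ^+ 2.
  apply: eq_bigr => i _; rewrite mxE (bigD1 j) //= big1 ?addr0 => [|k /negbTE kj].
    by rewrite mxE eqxx mulr1.
  by rewrite mxE kj mulr0.
have := opnorm_ge A x_unit; rewrite Ax_col => sqrt_le.
have col_ge0 : 0 <= \sum_i A i j ^+ 2 by apply: sumr_ge0 => i _; exact: sqr_ge0.
rewrite -(sqr_sqrtr col_ge0) lerXn2r ?nnegrE ?sqrtr_ge0 //.
exact: le_trans (sqrtr_ge0 _) sqrt_le.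
Qed.

Lemma opnorm_row A i : \sum_j A i j ^+ 2 <= opnorm A ^+ 2.
Proof.
set s := \sum_j A i j ^+ 2.
have s_ge0 : 0 <= s by apply: sumr_ge0 => j _; exact: sqr_ge0.
have [->|s_neq0] := eqVneq s 0; first exact: sqr_ge0.
set rho := Num.sqrt s.
have rho_gt0 : 0 < rho by rewrite sqrtr_gt0 lt_def s_neq0.
have rho2 : rho ^+ 2 = s by rewrite sqr_sqrtr.
pose x : 'cV[R]_n := \col_k (A i k / rho).
have x_unit : \sum_k x k 0 ^+ 2 = 1.
  by under eq_bigr do rewrite mxE expr_div_n; rewrite -mulr_suml rho2 mulfV.
have Ax_i : (A *m x) i 0 = rho.
  rewrite mxE; under eq_bigr do rewrite mxE mulrA -expr2.
  by rewrite -mulr_suml -/s -rho2 expr2 mulfK // gt_eqF.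
have rho_le : rho <= opnorm A.
  apply: le_trans (opnorm_ge A x_unit).
  rewrite -[leLHS](gtr0_norm rho_gt0) -sqrtr_sqr ler_sqrt; last first.
    by apply: sumr_ge0 => k _; exact: sqr_ge0.
  by rewrite -Ax_i (bigD1 i) //= lerDl sumr_ge0 // => k _; exact: sqr_ge0.
by rewrite -rho2 lerXn2r ?nnegrE ?(ltW rho_gt0) ?(le_trans (ltW rho_gt0)).
Qed.

End OperatorNorm.

Lemma cond_exp_etaE (R : realType) (n : nat) (p : 'I_n -> bool -> bool -> R)
    (X : gam_space n -> eta_space n -> R) (e : eta_space n) :
  (forall j, \sum_a \sum_b p j a b = 1) ->
  cond_exp_eta p X e = \sum_(g : gam_space n) (\prod_j p j (g j).1 (g j).2) * X g e.
Proof.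
move=> p_sum1; rewrite /cond_exp_eta /weight.
set c := \prod_(j < n) _.
have c_neq0 : c != 0 by rewrite prodf_seq_neq0; apply/allP => j _; rewrite invr_eq0 pnatr_eq0.
have mass1 : \sum_(g : gam_space n) \prod_j p j (g j).1 (g j).2 = 1.
  rewrite -(bigA_distr_bigA (fun j u => p j u.1 u.2)) /=.
  by apply: big1 => j _; rewrite -(p_sum1 j) pair_bigA; apply: eq_bigr => -[].
rewrite -big_distrl /= mass1 mul1r; under eq_bigr do rewrite mulrAC.
by rewrite -big_distrl /= mulfK.
Qed.

Lemma cond_exp_eta_decouple (R : realType) (n : nat) (p : 'I_n -> bool -> bool -> R)
    (B : 'I_n -> 'I_n -> R) (tau : R) (e : eta_space n) :
  (forall j, \sum_a \sum_b p j a b = 1) ->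
  cond_exp_eta p
    (fun (g : gam_space n) (eta : eta_space n) =>
       expR (tau * \sum_(i | eta i) ((g i).1%:R * \sum_(j | ~~ eta j) B i j * (g j).2%:R)))
    e =
  \sum_(x : {ffun 'I_n -> bool}) \sum_(y : {ffun 'I_n -> bool})
    (\prod_i \sum_t p i (x i) t) * (\prod_j \sum_t p j t (y j)) *
    expR (tau * \sum_(i | e i) ((x i)%:R * \sum_(j | ~~ e j) B i j * (y j)%:R)).
Proof.
move=> p_sum1; rewrite cond_exp_etaE //.
pose F (x y : {ffun 'I_n -> bool}) :=
  expR (tau * \sum_(i | e i) ((x i)%:R * \sum_(j | ~~ e j) B i j * (y j)%:R)).
have F_local (x x' y y' : {ffun 'I_n -> bool}) : (forall j, e j -> x j = x' j) ->
    (forall j, ~~ e j -> y j = y' j) -> F x y = F x' y'.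
  move=> xx' yy'; congr (expR (tau * _)); apply: eq_bigr => i ei.
  by rewrite xx' //; congr (_ * _); apply: eq_bigr => j ej; rewrite yy'.
have integrandE (g : gam_space n) :
    expR (tau * \sum_(i | e i) ((g i).1%:R * \sum_(j | ~~ e j) B i j * (g j).2%:R)) =
    F [ffun j => (g j).1] [ffun j => (g j).2].
  congr (expR (tau * _)); apply: eq_bigr => i _; rewrite ffunE.
  by congr (_ * _); apply: eq_bigr => j _; rewrite ffunE.
under eq_bigr do rewrite integrandE.
rewrite (@sum_ffun_pair_decouple _ _ _ (fun j u => p j u.1 u.2) e F) //.
by move=> j; rewrite -(p_sum1 j) pair_bigA; apply: eq_bigr => -[].
Qed.

Theorem lemma5 (R : realType) (n : nat) (p : 'I_n -> bool -> bool -> R)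
    (A : 'M[R]_n) (tau : R)
    (p_ge0 : forall j a b, 0 <= p j a b)
    (p_sum1 : forall j, \sum_(a : bool) \sum_(b : bool) p j a b = 1)
    (tau_gt0 : 0 < tau)
    (tau_le : 4%:R * tau * opnorm A ^+ 2 <= 1) :
  forall e : eta_space n,
    cond_exp_eta p
      (fun (g : gam_space n) (eta : eta_space n) =>
         expR (tau * \sum_(i < n | eta i)
                 ((g i).1%:R * \sum_(j < n | ~~ eta j) A i j ^+ 2 * (g j).2%:R)))
      e
    <= expR ((144%:R / 100%:R) * tau *
             \sum_(i < n) \sum_(j < n | i != j) A i j ^+ 2 * pi1 p i * pi2 p j).
Proof.
move=> e; rewrite cond_exp_eta_decouple //.
pose r j b := \sum_t p j b t; pose s j b := \sum_t p j t b.
have r_ge0 j b : 0 <= r j b by apply: sumr_ge0.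
have s_ge0 j b : 0 <= s j b by apply: sumr_ge0.
have r_sum1 j : r j false + r j true = 1 by rewrite addrC -(p_sum1 j) big_bool.
have s_sum1 j : s j false + s j true = 1.
  by rewrite addrC -(p_sum1 j) exchange_big big_bool.
apply: le_trans (bernoulli_bilinear_expR_le e (predC e) r_ge0 r_sum1 s_ge0 s_sum1
  (fun i j => sqr_ge0 (A i j)) (opnorm_row A) (opnorm_col A) (ltW tau_gt0) tau_le) _.
rewrite ler_expR (_ : 144%:R / 100%:R = 36/25 :> R); last by lra.
rewrite ler_pM2l ?mulr_gt0 //.
under eq_bigr do under eq_bigr do rewrite [r _ _ * _]mulrC.
apply: (sum_cross_le_offdiag (F := fun i j => A i j ^+ 2 * pi1 p i * pi2 p j)) => [i|i j] /=.
  by rewrite negbK.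
by do 2?apply: mulr_ge0; rewrite ?sqr_ge0 ?sumr_ge0.
Qed.
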